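(* Let $b$ be a $\kappa$--contracting geodesic ray in a proper CAT(0) space $X$, and let $m_b$ be the function provided by the Strongly Morse theorem applied to $Z=b$. Then for every $(q,Q)$--quasi-geodesic ray $\beta$ that $\kappa$--fellow travels $b$, we have $\beta\subset\mathcal N_\kappa(b,m_b(q,Q))$ and $b\subset\mathcal N_\kappa(\beta,2m_b(q,Q))$.
   Context: $\|x\|=d_X(\mathfrak o,x)$; $\kappa:[0,\infty)\to[1,\infty)$ monotone increasing, concave, sublinear; $\kappa(x):=\kappa(\|x\|)$; $\mathcal N_\kappa(Z,n)=\{x:d_X(x,Z)\le n\kappa(x)\}$. Quasi-geodesic rays are continuous quasi-isometric embeddings of $[0,\infty)$ starting at $\mathfrak o$; two rays $\kappa$--fellow travel if each lies in some $(\kappa,n)$--neighbourhood of the other. $Z$ is $\kappa$--contracting if there is $c_Z$ with $\operatorname{diam}(x_Z\cup y_Z)\le c_Z\kappa(x)$ whenever $d_X(x,y)\le d_X(x,Z)$. The Strongly Morse theorem: for a closed $\kappa$--contracting $Z\ni\mathfrak o$ there is $m_Z:\mathbb R^2\to\mathbb R$ such that for all $r,n>0$ and sublinear $\kappa'$ there is $R>0$ so that for every $(q,Q)$--quasi-geodesic ray $\eta$ with $m_Z(q,Q)\le r/(2\kappa(r))$, if $t_r,t_R$ are the first times with $\|\eta(t_r)\|=r$, $\|\eta(t_R)\|=R$ and $d_X(\eta(t_R),Z)\le n\kappa'(R)$, then $\eta([0,t_r])\subset\mathcal N_\kappa(Z,m_Z(q,Q))$. *)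

From Stdlib Require Import Reals Lra ClassicalEpsilon.
Open Scope R_scope.

Section Defs.
Context {X : Type} (d : X -> X -> R).

Definition is_metric : Prop :=
  (forall x y, 0 <= d x y) /\ (forall x y, d x y = 0 <-> x = y) /\
  (forall x y, d x y = d y x) /\ (forall x y z, d x z <= d x y + d y z).

(** Proper: closed balls are compact (sequentially, equivalent in metric
    spaces): every sequence in a closed ball has a subsequence converging
    to a point of that ball. *)
Definition is_proper : Prop :=
  forall (c : X) (r : R) (u : nat -> X), (forall n, d c (u n) <= r) ->
  exists (phi : nat -> nat) (x : X),
    (forall n, (phi n < phi (S n))%nat) /\ d c x <= r /\
    (forall eps, eps > 0 -> exists N, forall n, (n >= N)%nat -> d (u (phi n)) x < eps).

Definition geodesic_seg (gamma : R -> X) (a b : X) : Prop :=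
  gamma 0 = a /\ gamma (d a b) = b /\
  forall s t, 0 <= s <= d a b -> 0 <= t <= d a b ->
    d (gamma s) (gamma t) = Rabs (s - t).

Definition is_geodesic_space : Prop :=
  forall a b, exists gamma, geodesic_seg gamma a b.

End Defs.

Definition eucl (P Q : R * R) : R :=
  sqrt ((fst P - fst Q) ^ 2 + (snd P - snd Q) ^ 2).

Definition interp (A B : R * R) (s : R) : R * R :=
  (fst A + s * (fst B - fst A), snd A + s * (snd B - snd A)).

Section CAT0.
Context {X : Type} (d : X -> X -> R).

(** x is a point of the side [gamma] (from a to b) of a geodesic triangle,
    and xb is its comparison point on the side [A,B] of the comparison
    triangle. *)
Definition side_point (gamma : R -> X) (a b : X) (A B : R * R)
    (x : X) (xb : R * R) : Prop :=
  exists t, 0 <= t <= d a b /\ x = gamma t /\ xb = interp A B (t / d a b).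

Definition is_CAT0 : Prop :=
  is_geodesic_space d /\
  forall (p q r : X) (g1 g2 g3 : R -> X) (P Q Rr : R * R),
    geodesic_seg d g1 p q -> geodesic_seg d g2 q r -> geodesic_seg d g3 r p ->
    eucl P Q = d p q -> eucl Q Rr = d q r -> eucl Rr P = d r p ->
    forall x xb y yb,
      (side_point g1 p q P Q x xb \/ side_point g2 q r Q Rr x xb \/
       side_point g3 r p Rr P x xb) ->
      (side_point g1 p q P Q y yb \/ side_point g2 q r Q Rr y yb \/
       side_point g3 r p Rr P y yb) ->
      d x y <= eucl xb yb.
End CAT0.

Definition sublinear_fun (kappa : R -> R) : Prop :=
  (forall t, 0 <= t -> 1 <= kappa t) /\
  (forall s t, 0 <= s -> s <= t -> kappa s <= kappa t) /\
  (forall s t l, 0 <= s -> 0 <= t -> 0 <= l <= 1 ->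
     l * kappa s + (1 - l) * kappa t <= kappa (l * s + (1 - l) * t)) /\
  (forall eps, eps > 0 -> exists T, forall t, t >= T -> kappa t <= eps * t).

Definition is_glb (E : R -> Prop) (m : R) : Prop :=
  (forall x, E x -> m <= x) /\ (forall m', (forall x, E x -> m' <= x) -> m' <= m).

Section Geom.
Context {X : Type} (d : X -> X -> R) (o : X) (kappa : R -> R).

(** d(x, Z) = inf_{z in Z} d(x, z) (meaningful for nonempty Z). *)
Definition dist_set (Z : X -> Prop) (x : X) : R :=
  epsilon (inhabits 0) (is_glb (fun r => exists z, Z z /\ r = d x z)).

(** ||x|| = d(o, x), and kappa(x) := kappa(||x||). *)
Definition nrm (x : X) : R := d o x.

Definition kappa_nbhd (Z : X -> Prop) (n : R) (x : X) : Prop :=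
  dist_set Z x <= n * kappa (nrm x).

Definition subset (A B : X -> Prop) : Prop := forall x, A x -> B x.

Definition proj (Z : X -> Prop) (x : X) (z : X) : Prop :=
  Z z /\ d x z = dist_set Z x.

Definition kappa_contracting (Z : X -> Prop) : Prop :=
  exists cZ : R, forall x y, d x y <= dist_set Z x ->
    forall a b, (proj Z x a \/ proj Z y a) -> (proj Z x b \/ proj Z y b) ->
      d a b <= cZ * kappa (nrm x).

Definition geodesic_ray (b : R -> X) : Prop :=
  b 0 = o /\ forall s t, 0 <= s -> 0 <= t -> d (b s) (b t) = Rabs (s - t).

Definition quasi_geodesic_ray (q Q : R) (eta : R -> X) : Prop :=
  eta 0 = o /\
  (forall t, 0 <= t -> forall eps, eps > 0 -> exists del, del > 0 /\
     forall s, 0 <= s -> Rabs (s - t) < del -> d (eta s) (eta t) < eps) /\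
  (forall s t, 0 <= s -> 0 <= t ->
     / q * Rabs (s - t) - Q <= d (eta s) (eta t) /\
     d (eta s) (eta t) <= q * Rabs (s - t) + Q).

Definition ray_image (g : R -> X) (x : X) : Prop := exists t, 0 <= t /\ x = g t.

Definition seg_image (g : R -> X) (T : R) (x : X) : Prop :=
  exists t, 0 <= t <= T /\ x = g t.

Definition kappa_fellow_travel (g1 g2 : R -> X) : Prop :=
  (exists n, subset (ray_image g1) (kappa_nbhd (ray_image g2) n)) /\
  (exists n, subset (ray_image g2) (kappa_nbhd (ray_image g1) n)).

Definition first_time (eta : R -> X) (r t : R) : Prop :=
  0 <= t /\ nrm (eta t) = r /\ forall s, 0 <= s < t -> nrm (eta s) <> r.

(** The conclusion of the Strongly Morse theorem for Z and m = m_Z. *)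
Definition strongly_morse (Z : X -> Prop) (m : R -> R -> R) : Prop :=
  forall r n, r > 0 -> n > 0 -> forall kappa' : R -> R, sublinear_fun kappa' ->
  exists Rr, Rr > 0 /\
    forall q Q (eta : R -> X), 1 <= q -> 0 <= Q -> quasi_geodesic_ray q Q eta ->
      m q Q <= r / (2 * kappa r) ->
      forall tr tR, first_time eta r tr -> first_time eta Rr tR ->
        dist_set Z (eta tR) <= n * kappa' Rr ->
        subset (seg_image eta tr) (kappa_nbhd Z (m q Q)).
End Geom.

From Stdlib Require Import Reals Lra Classical ClassicalEpsilon.
Open Scope R_scope.

(** First inclusion: a point beta(t0) lies on the initial segment
    beta([0, t_r]) for every radius r large enough; by sublinearity of kappa
    we may choose such an r with m_b(q,Q) <= r / (2 kappa(r)).  Fellow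
    travelling bounds d(beta(t_R), b) by n kappa(R) for the radius R given by
    the Strongly Morse property, which then places beta([0, t_r]) in
    N_kappa(b, m_b(q,Q)).  Second inclusion: the point b(s) is compared with
    a point x = beta(t) of norm s (which exists by continuity of beta);
    since b is a geodesic ray issued from o, d(b(s), x) <= 2 d(x, b). *)

Lemma glb_exists (E : R -> Prop) :
  (exists x, E x) -> (forall x, E x -> 0 <= x) -> exists m, is_glb E m.
Proof.
  intros [x0 Hx0] Hlb.
  destruct (completeness (fun y => E (- y))) as [L [HL1 HL2]].
  - exists 0. intros y Hy. specialize (Hlb _ Hy). lra.
  - exists (- x0). rewrite Ropp_involutive. exact Hx0.
  - unfold is_upper_bound in *. exists (- L). split.
    + intros x Hx. specialize (HL1 (- x)). rewrite Ropp_involutive in HL1.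
      specialize (HL1 Hx). lra.
    + intros m' Hm'. assert (L <= - m').
      { apply HL2. intros y Hy. specialize (Hm' _ Hy). lra. }
      lra.
Qed.

Section MetricFacts.
Context {X : Type} (d : X -> X -> R) (Hmet : is_metric d).

Lemma dist_set_glb (Z : X -> Prop) (x z0 : X) : Z z0 ->
  is_glb (fun r => exists z, Z z /\ r = d x z) (dist_set d Z x).
Proof.
  intros Hz0. unfold dist_set. apply epsilon_spec, glb_exists.
  - exists (d x z0); eauto.
  - intros r [z [_ ->]]. apply (proj1 Hmet).
Qed.

Lemma dist_set_le (Z : X -> Prop) (x z : X) : Z z -> dist_set d Z x <= d x z.
Proof. intros Hz. apply (proj1 (dist_set_glb Z x z Hz)). eauto. Qed.

Lemma dist_set_approx (Z : X -> Prop) (x z0 : X) (eps : R) : Z z0 -> eps > 0 ->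
  exists z, Z z /\ d x z < dist_set d Z x + eps.
Proof.
  intros Hz0 He. apply NNPP. intros Hnone.
  assert (dist_set d Z x + eps <= dist_set d Z x); [|lra].
  apply (proj2 (dist_set_glb Z x z0 Hz0)). intros r [z [Hz ->]].
  apply Rnot_lt_le. intros Hlt. apply Hnone. eauto.
Qed.

Lemma nrm_lipschitz (o x y : X) : Rabs (nrm d o x - nrm d o y) <= d x y.
Proof.
  destruct Hmet as [_ [_ [Hsym Htri]]]. unfold nrm.
  pose proof (Htri o y x) as H1. pose proof (Htri o x y) as H2.
  rewrite (Hsym y x) in H1. apply Rabs_le. lra.
Qed.

End MetricFacts.

Definition continuous_halfline (g : R -> R) : Prop :=
  forall t, 0 <= t -> forall eps, eps > 0 -> exists del, del > 0 /\
    forall s, 0 <= s -> Rabs (s - t) < del -> Rabs (g s - g t) < eps.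

Section FirstCrossing.
Variables (g : R -> R) (r T : R).
Hypothesis (Hg : continuous_halfline g) (Hg0 : g 0 < r) (HT : 0 <= T)
  (HgT : r <= g T).

(** The times up to which g stays below r; its supremum is the first time
    at which g reaches r. *)
Let below (t : R) : Prop := 0 <= t /\ forall s, 0 <= s <= t -> g s < r.

Lemma first_crossing :
  exists c, 0 <= c /\ g c = r /\ forall s, 0 <= s < c -> g s < r.
Proof.
  assert (Hb0 : below 0).
  { split; [lra|]. intros s Hs. replace s with 0 by lra. exact Hg0. }
  assert (Hbound : bound below).
  { exists T. intros t [Ht Hall]. destruct (Rle_lt_dec t T); [lra|].
    specialize (Hall T ltac:(lra)). lra. }
  destruct (completeness below Hbound (ex_intro _ 0 Hb0)) as [c [Hub Hleast]].
  assert (Hc0 : 0 <= c) by exact (Hub 0 Hb0).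
  assert (Hbefore : forall s, 0 <= s < c -> g s < r).
  { intros s Hs. apply Rnot_le_lt. intros Hge.
    assert (c <= s); [|lra].
    apply Hleast. intros t [Ht Hall]. destruct (Rle_lt_dec t s); [lra|].
    specialize (Hall s ltac:(lra)). lra. }
  exists c. repeat split; [exact Hc0| |exact Hbefore].
  destruct (Rtotal_order (g c) r) as [Hlt|[Heq|Hgt]]; [exfalso|exact Heq|exfalso].
  - (* g stays below r slightly beyond c, contradicting maximality *)
    destruct (Hg c Hc0 (r - g c)) as [del [Hdel Hnear]]; [lra|].
    assert (Hbeyond : below (c + del / 2)).
    { split; [lra|]. intros s Hs. destruct (Rlt_le_dec s c); [apply Hbefore; lra|].
      assert (Habs : Rabs (s - c) < del) by (rewrite Rabs_pos_eq; lra).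
      pose proof (Rabs_def2 _ _ (Hnear s ltac:(lra) Habs)). lra. }
    specialize (Hub _ Hbeyond). lra.
  - (* g exceeds r slightly before c, contradicting [Hbefore] *)
    assert (Hcpos : 0 < c).
    { destruct (Req_dec c 0) as [E|]; [rewrite E in Hgt; lra|lra]. }
    destruct (Hg c Hc0 (g c - r)) as [del [Hdel Hnear]]; [lra|].
    set (s := Rmax (c / 2) (c - del / 2)).
    assert (c / 2 <= s) by apply Rmax_l.
    assert (c - del / 2 <= s) by apply Rmax_r.
    assert (s < c) by (apply Rmax_lub_lt; lra).
    assert (Habs : Rabs (s - c) < del) by (rewrite Rabs_minus_sym, Rabs_pos_eq; lra).
    pose proof (Rabs_def2 _ _ (Hnear s ltac:(lra) Habs)).
    specialize (Hbefore s ltac:(lra)). lra.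
Qed.

End FirstCrossing.

Section QuasiGeodesicRays.
Context {X : Type} (d : X -> X -> R) (Hmet : is_metric d) (o : X).
Variables (q Q : R) (eta : R -> X).
Hypothesis (Hq : 1 <= q) (Heta : quasi_geodesic_ray d o q Q eta).

Lemma quasi_ray_norm_bounds (t : R) : 0 <= t ->
  / q * t - Q <= nrm d o (eta t) <= q * t + Q.
Proof.
  intros Ht. destruct Heta as [H0 [_ Hqi]]. unfold nrm. rewrite <- H0.
  destruct (Hqi 0 t (Rle_refl 0) Ht) as [Hlo Hhi].
  rewrite Rabs_minus_sym, Rminus_0_r, Rabs_pos_eq in Hlo, Hhi by lra.
  lra.
Qed.

Lemma quasi_ray_norm_continuous : continuous_halfline (fun t => nrm d o (eta t)).
Proof.
  intros t Ht eps He. destruct (proj1 (proj2 Heta) t Ht eps He) as [del [Hdel Hc]].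
  exists del. split; [exact Hdel|]. intros s Hs Hst.
  eapply Rle_lt_trans; [apply nrm_lipschitz; exact Hmet|]. apply Hc; assumption.
Qed.

Lemma quasi_ray_first_time (r : R) : r > 0 -> exists t, first_time d o eta r t.
Proof.
  intros Hr.
  assert (Hn0 : nrm d o (eta 0) = 0).
  { unfold nrm. rewrite (proj1 Heta). apply (proj1 (proj2 Hmet)). reflexivity. }
  assert (HT : 0 <= q * (r + Q + 1)).
  { apply Rmult_le_pos; [lra|].
    pose proof (quasi_ray_norm_bounds 0 (Rle_refl 0)). lra. }
  assert (Hfar : r <= nrm d o (eta (q * (r + Q + 1)))).
  { pose proof (quasi_ray_norm_bounds _ HT) as [Hlo _].
    replace (/ q * (q * (r + Q + 1))) with (r + Q + 1) in Hlo by (field; lra). lra. }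
  destruct (first_crossing (fun t => nrm d o (eta t)) r _ quasi_ray_norm_continuous
              ltac:(lra) HT Hfar) as [c [Hc [Hcr Hbefore]]].
  exists c. repeat split; [exact Hc|exact Hcr|].
  intros s Hs. specialize (Hbefore s Hs). simpl in Hbefore. lra.
Qed.

Lemma quasi_ray_attains_norm (s : R) : 0 <= s -> exists t, 0 <= t /\ nrm d o (eta t) = s.
Proof.
  intros Hs. destruct (Req_dec s 0) as [->|Hs0].
  - exists 0. split; [lra|]. unfold nrm. rewrite (proj1 Heta).
    apply (proj1 (proj2 Hmet)). reflexivity.
  - destruct (quasi_ray_first_time s ltac:(lra)) as [t [Ht [Hts _]]]. eauto.
Qed.

Lemma first_time_lower_bound (r t : R) : first_time d o eta r t -> r <= q * t + Q.
Proof.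
  intros [Ht [Hnt _]]. rewrite <- Hnt. apply (quasi_ray_norm_bounds t Ht).
Qed.

End QuasiGeodesicRays.

Lemma sublinear_large_radius (kappa : R -> R) (a R0 : R) : sublinear_fun kappa ->
  exists r, R0 <= r /\ 0 < r /\ a <= r / (2 * kappa r).
Proof.
  intros [Hk1 [_ [_ Hksub]]].
  set (a' := Rabs a + 1).
  assert (Ha' : a' > 0) by (unfold a'; pose proof (Rabs_pos a); lra).
  destruct (Hksub (/ (2 * a'))) as [T HT].
  { apply Rlt_gt, Rinv_0_lt_compat. lra. }
  set (r := Rmax (Rmax T 1) R0).
  assert (Rmax T 1 <= r) by apply Rmax_l.
  assert (R0 <= r) by apply Rmax_r.
  assert (T <= Rmax T 1) by apply Rmax_l.
  assert (1 <= Rmax T 1) by apply Rmax_r.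
  clearbody r.
  exists r. repeat split; [assumption|lra|].
  assert (Hkr := HT r ltac:(lra)). assert (Hkr1 := Hk1 r ltac:(lra)).
  apply Rle_trans with a'; [unfold a'; pose proof (Rle_abs a); lra|].
  apply Rmult_le_reg_r with (2 * kappa r); [lra|].
  unfold Rdiv. rewrite Rmult_assoc, Rinv_l by lra.
  apply Rmult_le_compat_l with (r := 2 * a') in Hkr; [|lra].
  replace (2 * a' * (/ (2 * a') * r)) with r in Hkr by (field; lra). lra.
Qed.

Lemma quasi_ray_in_morse_nbhd {X : Type} (d : X -> X -> R) (o : X) (kappa : R -> R)
  (Z : X -> Prop) (m : R -> R -> R) (q Q n : R) (eta : R -> X) :
  is_metric d -> sublinear_fun kappa -> strongly_morse d o kappa Z m ->
  1 <= q -> 0 <= Q -> quasi_geodesic_ray d o q Q eta ->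
  subset (ray_image eta) (kappa_nbhd d o kappa Z n) ->
  subset (ray_image eta) (kappa_nbhd d o kappa Z (m q Q)).
Proof.
  intros Hmet Hkappa Hmorse Hq HQ Heta Hn x [t0 [Ht0 ->]].
  destruct (sublinear_large_radius kappa (m q Q) (q * t0 + Q + 1) Hkappa)
    as [r [Hr_far [Hr_pos Hr_ratio]]].
  set (n' := Rmax n 1). assert (n <= n') by apply Rmax_l. assert (1 <= n') by apply Rmax_r.
  destruct (Hmorse r n' Hr_pos ltac:(lra) kappa Hkappa) as [Rr [HRr Hsegment]].
  destruct (quasi_ray_first_time d Hmet o q Q eta Hq Heta r Hr_pos) as [tr Htr].
  destruct (quasi_ray_first_time d Hmet o q Q eta Hq Heta Rr HRr) as [tR HtR].
  assert (Ht0r : t0 <= tr).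
  { pose proof (first_time_lower_bound d o q Q eta Heta r tr Htr). nra. }
  assert (Hfar : dist_set d Z (eta tR) <= n' * kappa Rr).
  { destruct HtR as [HtR0 [HntR _]].
    assert (Hk1 := proj1 Hkappa Rr ltac:(lra)).
    specialize (Hn (eta tR) (ex_intro _ tR (conj HtR0 eq_refl))).
    unfold kappa_nbhd in Hn. rewrite HntR in Hn.
    apply Rle_trans with (n * kappa Rr); [exact Hn|].
    apply Rmult_le_compat_r; lra. }
  apply (Hsegment q Q eta Hq HQ Heta Hr_ratio tr tR Htr HtR Hfar).
  exists t0. split; [lra|reflexivity].
Qed.

Section GeodesicRays.
Context {X : Type} (d : X -> X -> R) (Hmet : is_metric d) (o : X) (b : R -> X).
Hypothesis (Hb : geodesic_ray d o b).

Lemma geodesic_ray_nrm (u : R) : 0 <= u -> nrm d o (b u) = u.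
Proof.
  intros Hu. unfold nrm. destruct Hb as [Hb0 Hbd]. rewrite <- Hb0.
  rewrite Hbd by lra. rewrite Rminus_0_l, Rabs_Ropp, Rabs_pos_eq; lra.
Qed.

(** The point of b with the same norm as x is within twice the distance
    from x to b: if b(u) nearly realises d(x, b), then |u - ||x||| <= d(x, b(u)). *)
Lemma geodesic_ray_same_norm_point (x : X) :
  d (b (nrm d o x)) x <= 2 * dist_set d (ray_image b) x.
Proof.
  destruct Hmet as [Hpos [_ [Hsym Htri]]].
  assert (Hx : 0 <= nrm d o x) by apply Hpos.
  apply Rle_plus_epsilon. intros eps He.
  destruct (dist_set_approx d Hmet (ray_image b) x o (eps / 2)
              (ex_intro _ 0 (conj (Rle_refl 0) (eq_sym (proj1 Hb)))) ltac:(lra))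
    as [z [[u [Hu ->]] Hz]].
  pose proof (nrm_lipschitz d Hmet o x (b u)) as Hnorm.
  rewrite geodesic_ray_nrm in Hnorm by exact Hu.
  pose proof (Htri (b (nrm d o x)) (b u) x) as Hvia.
  rewrite (proj2 Hb _ _ Hx Hu), (Hsym (b u) x) in Hvia.
  lra.
Qed.

End GeodesicRays.

Theorem corollary3p12 (X : Type) (d : X -> X -> R) (o : X) (kappa : R -> R)
  (Hmet : is_metric d) (Hprop : is_proper d) (Hcat : is_CAT0 d)
  (Hkappa : sublinear_fun kappa)
  (b : R -> X) (Hb : geodesic_ray d o b)
  (Hcontr : kappa_contracting d o kappa (ray_image b))
  (mb : R -> R -> R) (Hmb : strongly_morse d o kappa (ray_image b) mb)
  (q Q : R) (Hq : 1 <= q) (HQ : 0 <= Q) (beta : R -> X)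
  (Hbeta : quasi_geodesic_ray d o q Q beta)
  (Hft : kappa_fellow_travel d o kappa beta b) :
  subset (ray_image beta) (kappa_nbhd d o kappa (ray_image b) (mb q Q)) /\
  subset (ray_image b) (kappa_nbhd d o kappa (ray_image beta) (2 * mb q Q)).
Proof.
  destruct Hft as [[n Hn] _].
  assert (Hbeta_near : subset (ray_image beta) (kappa_nbhd d o kappa (ray_image b) (mb q Q)))
    by exact (quasi_ray_in_morse_nbhd d o kappa _ mb q Q n beta Hmet Hkappa Hmb Hq HQ Hbeta Hn).
  split; [exact Hbeta_near|].
  intros y [s [Hs ->]]. unfold kappa_nbhd.
  rewrite (geodesic_ray_nrm d o b Hb s Hs).
  (* compare b(s) with a point beta(t) of the same norm s *)
  destruct (quasi_ray_attains_norm d Hmet o q Q beta Hq Hbeta s Hs) as [t [Ht Hnt]].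
  pose proof (Hbeta_near (beta t) (ex_intro _ t (conj Ht eq_refl))) as Hnear.
  unfold kappa_nbhd in Hnear. rewrite Hnt in Hnear.
  pose proof (geodesic_ray_same_norm_point d Hmet o b Hb (beta t)) as Hsame.
  rewrite Hnt in Hsame.
  apply Rle_trans with (d (b s) (beta t)).
  - apply dist_set_le; [exact Hmet|]. exists t. split; [exact Ht|reflexivity].
  - lra.
Qed.
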